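(* Let $s\ge 1$, $q\in\{1,\dots,5^s-1\}$, $n\ge 3$ and $i\ge 1$ be integers. Consider the cylindrical Lights Out game on a board with $i$ rows and $n$ columns whose lights have $k=5^s$ states, with every light initially in the same state $k-q$. If $i\equiv 0\pmod{5^s}$ or $i\equiv -1\pmod{5^s}$, then the game is one-pass solvable.
   Context: Cylindrical Lights Out game: a grid of buttons with $i$ rows (numbered $1,\dots,i$ from top to bottom) and $n$ columns, whose left and right sides are identified, so column $1$ and column $n$ are adjacent; rows do not wrap around. Each button has a light whose state is an element of $\mathbb{Z}/k\mathbb{Z}$, state $0$ meaning ''off''. Pressing a button once adds $1 \pmod k$ to the state of its own light and to the states of the lights orthogonally adjacent to it (above, below, left, right, where they exist, with columns taken cyclically). One-pass chasing: for $r=2,3,\dots,i$ in turn, press each button in row $r$ the number of times in $\{0,\dots,k-1\}$ needed to bring the light directly above it (in row $r-1$) to state $0$. The game is one-pass solvable if after this procedure all lights on the board are in state $0$. *)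

From mathcomp Require Import all_boot.
Set Implicit Arguments. Unset Strict Implicit. Unset Printing Implicit Defensive.

(* Board with i rows and n columns; rows are 0-indexed (paper's row r+1 is
   our row r), columns 0..n-1 taken cyclically.  A board is a function
   giving the state (a natural number read modulo k, kept in [0,k)) of the
   light at (row, column). *)
Definition board := nat -> nat -> nat.

Definition affects (n r c r' c' : nat) : bool :=
  [|| (r' == r) && (c' == c),
      (r' == r) && ((c' == c.+1 %% n) || (c == c'.+1 %% n))
    | (c' == c) && ((r'.+1 == r) || (r.+1 == r'))].

Definition press (k n r c t : nat) (b : board) : board :=
  fun r' c' => if affects n r c r' c' then (b r' c' + t) %% k else b r' c'.

(* Process row r (r >= 1): for each column c in turn, press (r,c) the number
   of times in {0,..,k-1} needed to turn light (r-1,c) off. *)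
Definition chase_row (k n r : nat) (b : board) : board :=
  foldl (fun b c => press k n r c ((k - b r.-1 c %% k) %% k) b) b (iota 0 n).

Definition chase (k i n : nat) (b : board) : board :=
  foldl (fun b r => chase_row k n r b) b (iota 1 i.-1).

Definition one_pass_solvable (k i n : nat) (b : board) : Prop :=
  forall r c, r < i -> c < n -> chase k i n b r c = 0.

From mathcomp Require Import all_boot ssralg zmodp zify ring.
Import GRing.Theory.

Set Implicit Arguments.
Unset Strict Implicit.
Unset Printing Implicit Defensive.

(* Starting from a board whose lights all show [a], every row stays constant
   (the board is a cylinder), so chasing row [r] presses each of its buttons
   the same number [x_r] of times, and the light in row [r] ends at
   [a + x_(r-1) + 3 x_r + x_(r+1)] modulo [k]. Clearing rows in turn forces
   [x_r = -a g_r] with [g_r = (-1)^(r+1) F_r F_(r+1)], the solution of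
   [g_(r-1) + 3 g_r + g_(r+1) = 1], [g_0 = 0]; every row but the last is then
   cleared and the last one shows [a g_i]. Finally [5^s] divides [F_(5^s j)]
   by iterating [F_(5m) = 5 F_m (5 F_m^4 + 5 (-1)^m F_m^2 + 1)], so [g_i = 0]
   modulo [5^s] when [5^s] divides [i] or [i + 1]. The bookkeeping modulo [k]
   is done in an arbitrary ring in which [k = 0], in the end ['Z_k]. *)

Lemma count_mem_subset (T : eqType) (s t : seq T) :
  uniq s -> uniq t -> {subset s <= t} -> count (mem s) t = size s.
Proof.
move=> s_uniq t_uniq s_t; rewrite -size_filter; apply/perm_size/uniq_perm => //.
  exact: filter_uniq.
by move=> x; rewrite mem_filter andb_idr //; apply: s_t.
Qed.

Lemma cyclic_succE n c : c < n -> c.+1 %% n = if c.+1 == n then 0 else c.+1.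
Proof.
by move=> lt_cn; case: eqP => [->|ne]; rewrite ?modnn // modn_small //; lia.
Qed.

Lemma cyclic_predE n c : c < n -> (c + n.-1) %% n = if c == 0 then n.-1 else c.-1.
Proof.
move=> lt_cn; case: eqP => [->|ne]; first by rewrite modn_small //; lia.
by rewrite (_ : c + n.-1 = c.-1 + n) ?modnDr ?modn_small //; lia.
Qed.

Lemma count_cyclic_neighbours n c' : 2 < n -> c' < n ->
  count (fun c => [|| c' == c, c' == c.+1 %% n | c == c'.+1 %% n]) (iota 0 n) = 3.
Proof.
move=> n_gt2 lt_c'n.
have succ_eq_pred c : c < n -> (c' == c.+1 %% n) = (c == (c' + n.-1) %% n).
  move=> lt_cn; rewrite cyclic_succE // cyclic_predE //.
  by case: (c.+1 =P n); case: (c' =P 0) => ? ?; apply/eqP/eqP; lia.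
rewrite (@eq_in_count _ _ (mem [:: c'; (c' + n.-1) %% n; c'.+1 %% n])); last first.
  by move=> c; rewrite mem_iota => /andP[_ lt_cn]; rewrite succ_eq_pred // !inE eq_sym.
apply: count_mem_subset; rewrite ?iota_uniq //; last first.
  by move=> x; rewrite mem_iota !inE => /or3P[] /eqP ->; rewrite ?ltn_pmod; lia.
rewrite /= !inE cyclic_succE // cyclic_predE // andbT.
by case: (c'.+1 =P n); case: (c' =P 0) => ? ?; lia.
Qed.

Lemma count_affects n r r' c' : 2 < n -> 0 < r -> c' < n ->
  count (fun c => affects n r c r' c') (iota 0 n) =
  (r'.-1 == r) + 3 * (r' == r) + (r'.+1 == r).
Proof.
move=> n_gt2 r_gt0 lt_c'n; have [->|ne_r'r] := eqVneq r' r.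
  have -> : (r.-1 == r) + 3 * true + (r.+1 == r) = 3 by lia.
  rewrite -(count_cyclic_neighbours n_gt2 lt_c'n); apply: eq_count => c.
  by rewrite /affects eqxx (gtn_eqF (ltnSn r)) /= andbF !orbF.
rewrite (@eq_count _ _
    (fun c => ((r'.+1 == r) || (r.+1 == r')) && (c == c'))); last first.
  by move=> c; rewrite /affects (negbTE ne_r'r) /= [c' == c]eq_sym andbC.
rewrite muln0 addn0; case: orP => [vertical|not_vertical] /=.
  rewrite (count_uniq_mem _ (iota_uniq 0 n)) mem_iota lt_c'n.
  by case: vertical => /eqP; lia.
by rewrite count_pred0; move: not_vertical; case: eqP; case: eqP => //=; lia.
Qed.

Lemma chase_lt k i n (b : board) : 0 < k -> (forall r c, b r c < k) ->
  forall r c, chase k i n b r c < k.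
Proof.
move=> k_gt0; rewrite /chase; elim: (iota 1 i.-1) b => [|r rs IHrs] b b_lt //=.
apply: IHrs; rewrite /chase_row; elim: (iota 0 n) b b_lt => [|c cs IHcs] b b_lt //=.
by apply: IHcs => r' c'; rewrite /press; case: ifP; rewrite ?ltn_pmod.
Qed.

Lemma chaseS k i n (b : board) :
  chase k i.+2 n b = chase_row k n i.+1 (chase k i.+1 n b).
Proof. by rewrite /chase -[i.+2.-1]addn1 iotaD foldl_cat add1n. Qed.

Local Open Scope ring_scope.

Section ChaseRow.
Variables (R : pzRingType) (k n : nat).
Hypotheses (k_gt0 : (0 < k)%N) (k_eq0 : k%:R = 0 :> R).

Lemma natr_modk a : (a %% k)%:R = a%:R :> R.
Proof. by rewrite {2}(divn_eq a k) natrD natrM k_eq0 mulr0 add0r. Qed.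

Lemma natr_negmod a : ((k - a %% k) %% k)%:R = - a%:R :> R.
Proof. by rewrite natr_modk natrB ?natr_modk ?k_eq0 ?sub0r // ltnW ?ltn_pmod. Qed.

Lemma press_natr r c t b r' c' :
  (press k n r c t b r' c')%:R = (b r' c')%:R + (affects n r c r' c')%:R * t%:R :> R.
Proof.
by rewrite /press; case: affects; rewrite ?natr_modk ?natrD ?mul1r ?mul0r ?addr0.
Qed.

Lemma affects_prev_row r c c0 : (0 < r)%N -> c0 != c -> affects n r c r.-1 c0 = false.
Proof.
by case: r => // r _ /negbTE c0_neq; rewrite /affects /= (ltn_eqF (ltnSn r)) c0_neq.
Qed.

Lemma foldl_press_natr r cs b (a : R) r' c' : (0 < r)%N -> uniq cs ->
  (forall c, c \in cs -> (b r.-1 c)%:R = a) ->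
  (foldl (fun b c => press k n r c ((k - b r.-1 c %% k) %% k) b) b cs r' c')%:R =
  (b r' c')%:R - (count (fun c => affects n r c r' c') cs)%:R * a.
Proof.
move=> r_gt0; elim: cs b => [|c cs IHcs] b /=; first by rewrite mul0r subr0.
case/andP=> c_notin_cs cs_uniq row_eq; rewrite IHcs // => [|c0 c0_in].
  rewrite press_natr natr_negmod (row_eq c (mem_head _ _)).
  by rewrite mulrN natrD mulrDl opprD addrA.
rewrite press_natr affects_prev_row ?mul0r ?addr0 //; last first.
  by apply: contraNneq c_notin_cs => <-.
by apply: row_eq; rewrite inE c0_in orbT.
Qed.

Lemma chase_row_natr r b (a : R) r' c' : (2 < n)%N -> (0 < r)%N -> (c' < n)%N ->
  (forall c, (c < n)%N -> (b r.-1 c)%:R = a) ->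
  (chase_row k n r b r' c')%:R =
  (b r' c')%:R - ((r'.-1 == r) + 3 * (r' == r) + (r'.+1 == r))%:R * a.
Proof.
move=> n_gt2 r_gt0 lt_c'n row_eq.
rewrite /chase_row (foldl_press_natr (a := a)) ?iota_uniq //.
  by rewrite count_affects.
by move=> c; rewrite mem_iota => /andP[_ /row_eq].
Qed.
End ChaseRow.

Section Fibonacci.
Variable R : comPzRingType.

Fixpoint fib (m : nat) : R :=
  if m is m'.+1 then (if m' is m''.+1 then fib m' + fib m'' else 1) else 0.

Lemma fibSS m : fib m.+2 = fib m.+1 + fib m.
Proof. by []. Qed.

Lemma fibD m p : fib (m + p) = fib m * fib p.+1 + (fib m.+1 - fib m) * fib p.
Proof.
elim: m p => [|m IHm] p; first by rewrite add0n /=; ring.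
by rewrite addSnnS IHm !fibSS; ring.
Qed.

Lemma fib_cassini m : fib m.+1 ^+ 2 - fib m * fib m.+2 = (-1) ^+ m.
Proof. by elim: m => [|m IHm]; rewrite ?exprS -?IHm !fibSS /=; ring. Qed.

Lemma fib_mul5 m : exists x, fib (5 * m) = 5 * fib m * x.
Proof.
have fib2 : fib (m + m) = fib m * fib m.+1 + (fib m.+1 - fib m) * fib m by rewrite fibD.
have fib2S : fib (m + m).+1 = fib m ^+ 2 + fib m.+1 ^+ 2.
  by rewrite -addnS fibD fibSS; ring.
rewrite (_ : (5 * m)%N = m + m + (m + m) + m)%N; last by lia.
rewrite fibD -(addnS (m + m)) !fibD fibSS fib2S fib2.
(* [t] is [(-1) ^+ m] by Cassini's identity. *)
move: (fib m) (fib m.+1) => a b; set t := b ^+ 2 - a * b - a ^+ 2.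
by exists (5 * a ^+ 4 + 5 * t * a ^+ 2 + t ^+ 2); rewrite /t; ring.
Qed.

Lemma fib_pow5_mul s j : exists x, fib (5 ^ s * j) = (5 ^ s)%:R * x.
Proof.
elim: s => [|s [x IHs]]; first by exists (fib j); rewrite mul1n mul1r.
have [y fib_5m] := fib_mul5 (5 ^ s * j).
rewrite expnS -mulnA fib_5m IHs.
by exists (x * y); rewrite natrM; ring.
Qed.

Lemma fib_pow5_eq0 s j : (5 ^ s)%:R = 0 :> R -> (5 ^ s %| j)%N -> fib j = 0.
Proof.
move=> pow5_eq0 /dvdnP[m ->]; have [x] := fib_pow5_mul s m.
by rewrite mulnC pow5_eq0 mul0r.
Qed.

Definition signed_fib_prod (m : nat) : R := (-1) ^+ m.+1 * fib m * fib m.+1.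

Lemma signed_fib_prod_rec m :
  signed_fib_prod m.+1 = 1 - signed_fib_prod m.-1 - 3 * signed_fib_prod m.
Proof.
case: m => [|m]; first by rewrite /signed_fib_prod /=; ring.
rewrite /signed_fib_prod -pred_Sn !exprS !fibSS !mulN1r.
have := fib_cassini m; have := sqrr_sign R m; rewrite fibSS.
move: (fib m) (fib m.+1) ((-1) ^+ m) => a b t t2 cassini.
by rewrite -[X in _ = X - _ - _]t2 -cassini; ring.
Qed.

Lemma signed_fib_prod_pow5_eq0 s m : (5 ^ s)%:R = 0 :> R ->
  (5 ^ s %| m)%N || (5 ^ s %| m.+1)%N -> signed_fib_prod m = 0.
Proof.
move=> pow5_eq0 /orP[] /(fib_pow5_eq0 pow5_eq0) fib_eq0;
  by rewrite /signed_fib_prod fib_eq0 ?mulr0 ?mul0r.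
Qed.
End Fibonacci.

Section ConstantBoard.
Variables (R : comPzRingType) (k n a : nat).
Hypotheses (k_gt0 : (0 < k)%N) (k_eq0 : k%:R = 0 :> R) (n_gt2 : (2 < n)%N).

(* Row [0] is never pressed, consistently with [signed_fib_prod 0 = 0]. *)
Definition row_presses (m j : nat) : R :=
  if (j <= m)%N then - a%:R * signed_fib_prod R j else 0.

Lemma row_presses0 j : row_presses 0 j = 0.
Proof.
rewrite /row_presses leqn0; case: eqP => // ->.
by rewrite /signed_fib_prod /= !(mulr0, mul0r).
Qed.

Lemma row_pressesS m j : row_presses m.+1 j =
  row_presses m j + (j == m.+1)%:R * (- a%:R * signed_fib_prod R m.+1).
Proof.
rewrite /row_presses leq_eqVlt ltnS; case: eqP => [->|_]; last by rewrite mul0r addr0.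
by rewrite ltnn mul1r add0r.
Qed.

Lemma chase_const_rows_natr m r c : (c < n)%N ->
  (chase k m.+1 n (fun _ _ => a) r c)%:R =
  a%:R + row_presses m r.-1 + 3 * row_presses m r + row_presses m r.+1.
Proof.
elim: m r c => [|m IHm] r c lt_cn; first by rewrite !row_presses0 mulr0 !addr0.
have row_m c0 : (c0 < n)%N ->
    (chase k m.+1 n (fun _ _ => a) m c0)%:R = a%:R * signed_fib_prod R m.+1.
  move=> lt_c0n; rewrite IHm // /row_presses leq_pred leqnn ltnn addr0.
  by rewrite signed_fib_prod_rec; ring.
rewrite chaseS (chase_row_natr k_gt0 k_eq0 (a := a%:R * signed_fib_prod R m.+1)) //.
by rewrite IHm // !row_pressesS !natrD; ring.
Qed.

Lemma chase_const_natr i r c : (r < i)%N -> (c < n)%N ->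
  (chase k i n (fun _ _ => a) r c)%:R =
  if r.+1 == i then a%:R * signed_fib_prod R i else 0.
Proof.
case: i => // m lt_rm lt_cn; rewrite chase_const_rows_natr // /row_presses eqSS.
case: eqP => [->|/eqP ne_rm].
  by rewrite leq_pred leqnn ltnn signed_fib_prod_rec; ring.
have [-> -> ->] : [/\ r.-1 <= m, r <= m & r < m]%N by split; lia.
by rewrite signed_fib_prod_rec; ring.
Qed.
End ConstantBoard.

Local Close Scope ring_scope.

Theorem theorem8 (s q n i : nat) :
  1 <= s -> 1 <= q <= 5 ^ s - 1 -> 3 <= n -> 1 <= i ->
  (i %% 5 ^ s = 0 \/ (i + 1) %% 5 ^ s = 0) ->
  one_pass_solvable (5 ^ s) i n (fun _ _ => 5 ^ s - q).
Proof.
move=> s_gt0 /andP[q_gt0 _] n_gt2 _ i_mod r c lt_ri lt_cn.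
have k_gt1 : (1 < 5 ^ s)%N by rewrite -{1}(expn0 5) ltn_exp2l.
have k_gt0 := ltnW k_gt1.
have chase_lt_k : chase (5 ^ s) i n (fun _ _ => 5 ^ s - q) r c < 5 ^ s.
  by apply: chase_lt => // _ _; rewrite ltn_subrL q_gt0.
rewrite -(modn_small chase_lt_k) -(val_Zp_nat k_gt1) chase_const_natr ?pchar_Zp //.
case: eqP => // _; rewrite (signed_fib_prod_pow5_eq0 (s := s)) ?mulr0 ?pchar_Zp //.
by move: i_mod; rewrite /dvdn addn1 => -[] ->; rewrite eqxx ?orbT.
Qed.
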